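(* There exists $N_0\in\mathbb{N}$ such that for every $N\ge N_0$ the following holds. Let $y\in[0,1]$ and let $(a_i)\in\{0,1\}^{\mathbb{N}}$ be a binary expansion of $y$, i.e. $y=\sum_{i\ge1}a_i2^{-i}$, satisfying $\#\{1\le i\le n:a_i=0\}\ge 0.4\,n$ for all $n\ge N$. Then $\left[0,\frac{1}{56\cdot 2^N}\right]\subseteq K_y$, where $K_y:=\{x\in\mathbb{R}:(x,y)\in K\}$.
   Context: For $k\ge 0$ and $n\ge 1$ let $t_{k,n}:=\frac{1}{2^k n}$. Define the similarities of $\mathbb{R}^2$: $U(x,y)=\left(\frac{x}{2},\frac{y+1}{2}\right)$, $D_0(x,y)=\left(\frac{x}{2},\frac{y}{2}\right)$, and $D_{k,n}(x,y)=\left(\frac{x+t_{k,n}}{2},\frac{y}{2}\right)$ for $k\ge0,n\ge1$. $K$ is the unique non-empty compact set $K\subset\mathbb{R}^2$ satisfying $K=U(K)\cup D_0(K)\cup\bigcup_{k\ge0,n\ge1}D_{k,n}(K)$. *)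

From Stdlib Require Import Reals.
Open Scope R_scope.

Definition pt := (R * R)%type.

Definition Umap (p : pt) : pt := (fst p / 2, (snd p + 1) / 2).
Definition D0map (p : pt) : pt := (fst p / 2, snd p / 2).
Definition tkn (k n : nat) : R := 1 / (2 ^ k * INR n).
Definition Dmap (k n : nat) (p : pt) : pt := ((fst p + tkn k n) / 2, snd p / 2).

Definition pt_cv (u : nat -> pt) (l : pt) : Prop :=
  Un_cv (fun m => fst (u m)) (fst l) /\ Un_cv (fun m => snd (u m)) (snd l).

Definition compact2 (A : pt -> Prop) : Prop :=
  forall u : nat -> pt, (forall m, A (u m)) ->
    exists (phi : nat -> nat) (l : pt),
      (forall m, (phi m < phi (S m))%nat) /\ A l /\ pt_cv (fun m => u (phi m)) l.

Definition IFS_fixed (K : pt -> Prop) : Prop :=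
  forall p, K p <->
    ((exists q, K q /\ p = Umap q) \/
     (exists q, K q /\ p = D0map q) \/
     (exists (k n : nat) q, (1 <= n)%nat /\ K q /\ p = Dmap k n q)).

(* a : nat -> bool, only indices i >= 1 are used; true = digit 1 *)
Definition digit (b : bool) : R := if b then 1 else 0.

Fixpoint zeros_upto (a : nat -> bool) (n : nat) : nat :=
  match n with
  | O => O
  | S m => (zeros_upto a m + (if a (S m) then 0 else 1))%nat
  end.

(* Renormalise x along the digits of y: w_0 = x and w_(n+1) = 2 w_n - t_n, where t_n = 0 if
   a_(n+1) = 1 (the map U) and otherwise t_n = 1/m with m the least integer such that 1/m < 2 w_n
   (the map D_(0,m), or D_0 when w_n = 0).  A digit 1 doubles w while a digit 0 at least squares
   it: 0 <= w_(n+1) <= 4 w_n^2.  Since zeros have density at least 2/5 after N and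
   x <= 1/(56 2^N), the squarings beat the doublings and w_n stays in [0, 1/2].  For p in K the
   points F_0(F_1(... F_(n-1)(p))) lie in K, their first coordinate is within 2^-n (|p| + 1) of
   x, and their second coordinate tends to y; as K is closed, (x, y) is in K. *)

From Stdlib Require Import Reals Lra Lia ZArith.
Open Scope R_scope.

Lemma Un_cv_subseq (u : nat -> R) (l : R) (phi : nat -> nat) :
  (forall m, (phi m < phi (S m))%nat) -> Un_cv u l -> Un_cv (fun m => u (phi m)) l.
Proof.
  intros Hphi Hu eps Heps.
  assert (Hge : forall m, (m <= phi m)%nat).
  { induction m as [|m IH]; [lia|]. specialize (Hphi m). lia. }
  destruct (Hu eps Heps) as [M HM]. exists M. intros n Hn.
  apply HM. specialize (Hge n). lia.
Qed.

Lemma compact2_limit (K : pt -> Prop) (u : nat -> pt) (l : pt) :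
  compact2 K -> (forall m, K (u m)) -> pt_cv u l -> K l.
Proof.
  intros HK Hu [H1 H2].
  destruct (HK u Hu) as (phi & l' & Hphi & Hl' & H1' & H2').
  assert (E1 : fst l' = fst l) by (eapply UL_sequence; [exact H1' | exact (Un_cv_subseq _ _ _ Hphi H1)]).
  assert (E2 : snd l' = snd l) by (eapply UL_sequence; [exact H2' | exact (Un_cv_subseq _ _ _ Hphi H2)]).
  destruct l, l'. simpl in E1, E2. subst. exact Hl'.
Qed.

Lemma cv_bounded_div_pow2 (c : nat -> R) (C : R) :
  (forall n, Rabs (c n) <= C) -> Un_cv (fun n => c n / 2 ^ n) 0.
Proof.
  intros Hc eps Heps.
  destruct (cv_pow_half C eps Heps) as [M HM]. exists M. intros n Hn.
  specialize (HM n Hn). unfold Rdist in *. rewrite Rminus_0_r in *.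
  assert (Hi : 0 < / 2 ^ n) by (apply Rinv_0_lt_compat, pow_lt; lra).
  unfold Rdiv in *. rewrite Rabs_mult, (Rabs_pos_eq (/ 2 ^ n)) by lra.
  eapply Rle_lt_trans; [|exact HM].
  eapply Rle_trans; [|apply Rle_abs].
  apply Rmult_le_compat_r; [lra | apply Hc].
Qed.

Lemma halving_tracking (t z : nat -> R) (g : nat -> nat -> R) (c : R) :
  (forall k, z (S k) = 2 * z k - t k) ->
  (forall k, g k O = c) ->
  (forall k n, g k (S n) = (g (S k) n + t k) / 2) ->
  forall n k, g k n - z k = (c - z (k + n)%nat) / 2 ^ n.
Proof.
  intros Hz Hg0 HgS. induction n as [|n IH]; intros k.
  - rewrite Hg0, Nat.add_0_r. simpl. field.
  - assert (H2n : 2 ^ n <> 0) by (apply pow_nonzero; lra).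
    rewrite HgS, Nat.add_succ_r, <- Nat.add_succ_l.
    replace ((c - z (S k + n)%nat) / 2 ^ S n) with ((c - z (S k + n)%nat) / 2 ^ n / 2)
      by (simpl; field; exact H2n).
    rewrite <- IH, Hz. field.
Qed.

Lemma sq_bound_half (w : R) (m E : nat) :
  w ^ 2 * 2 ^ E <= 2 ^ m -> (m + 2 <= E)%nat -> w <= 1 / 2.
Proof.
  intros Hw HmE.
  assert (Hp : 2 ^ (m + 2) <= 2 ^ E) by (apply Rle_pow; [lra | assumption]).
  assert (HB : 0 < 2 ^ m) by (apply pow_lt; lra).
  rewrite pow_add in Hp. simpl in Hp.
  assert (w ^ 2 * (2 ^ m * 4) <= 2 ^ m)
    by (eapply Rle_trans; [|exact Hw]; apply Rmult_le_compat_l; [apply pow2_ge_0 | lra]).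
  assert (w ^ 2 <= 1 / 4) by nra.
  nra.
Qed.

Lemma sq_bound_square (w w' : R) (m E E' : nat) :
  0 <= w -> 0 <= w' <= 4 * w ^ 2 -> w ^ 2 * 2 ^ E <= 2 ^ m -> (m + E' + 2 <= 2 * E)%nat ->
  w' ^ 2 * 2 ^ E' <= 2 ^ (m + 2).
Proof.
  intros Hw Hw' HwE HE.
  assert (Hp : 2 ^ (m + E' + 2) <= 2 ^ (2 * E)) by (apply Rle_pow; [lra | assumption]).
  rewrite (Nat.mul_comm 2 E), !pow_add, pow_mult in Hp. rewrite pow_add.
  set (A := 2 ^ E) in *. set (B := 2 ^ m) in *. set (C := 2 ^ E') in *.
  assert (HA : 0 < A) by (apply pow_lt; lra).
  assert (HB : 0 < B) by (apply pow_lt; lra).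
  assert (HC : 0 < C) by (apply pow_lt; lra).
  assert (HwA : 0 <= w ^ 2 * A) by (apply Rmult_le_pos; [apply pow2_ge_0 | lra]).
  assert (Hsq : (w ^ 2 * A) ^ 2 <= B ^ 2) by (apply pow_incr; lra).
  assert (Hw'4 : w' ^ 2 <= 16 * (w ^ 2) ^ 2) by (simpl; nra).
  apply Rmult_le_reg_r with (A ^ 2); [apply pow_lt; lra|].
  assert (w' ^ 2 * C * A ^ 2 <= 16 * (w ^ 2 * A) ^ 2 * C)
    by (replace (16 * (w ^ 2 * A) ^ 2 * C) with (16 * (w ^ 2) ^ 2 * C * A ^ 2) by ring;
        apply Rmult_le_compat_r; [apply pow2_ge_0 | apply Rmult_le_compat_r; lra]).
  assert (16 * (w ^ 2 * A) ^ 2 * C <= 16 * B ^ 2 * C) by (apply Rmult_le_compat_r; lra).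
  simpl in *. nra.
Qed.

Definition shift (b : bool) (m : nat) : R := if b then 0 else / INR m.

(* [b] is the binary digit of y; [m = 0] stands for D_0 (translation [/ INR 0 = 0]). *)
Definition step_map (b : bool) (m : nat) (q : pt) : pt :=
  if b then Umap q else match m with O => D0map q | S _ => Dmap 0 m q end.

Lemma step_map_in (K : pt -> Prop) (b : bool) (m : nat) (q : pt) :
  IFS_fixed K -> K q -> K (step_map b m q).
Proof.
  intros HK Hq. apply HK. destruct b; simpl.
  - left. now exists q.
  - destruct m as [|m].
    + right; left. now exists q.
    + right; right. exists 0%nat, (S m), q. split; [lia | auto].
Qed.

Lemma fst_step_map (b : bool) (m : nat) (q : pt) :
  fst (step_map b m q) = (fst q + shift b m) / 2.
Proof.
  unfold step_map, shift. destruct b; simpl; [lra|].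
  destruct m as [|m].
  - simpl. rewrite Rinv_0. lra.
  - unfold Dmap, tkn. cbn [fst]. rewrite pow_O. field. apply not_0_INR. lia.
Qed.

Lemma snd_step_map (b : bool) (m : nat) (q : pt) :
  snd (step_map b m q) = (snd q + digit b) / 2.
Proof. unfold step_map. destruct b; simpl; [reflexivity|]. destruct m; simpl; lra. Qed.

Fixpoint compose_steps (b : nat -> bool) (m : nat -> nat) (p : pt) (k n : nat) : pt :=
  match n with
  | O => p
  | S n' => step_map (b k) (m k) (compose_steps b m p (S k) n')
  end.

Lemma compose_steps_in (K : pt -> Prop) (b : nat -> bool) (m : nat -> nat) (p : pt) :
  IFS_fixed K -> K p -> forall n k, K (compose_steps b m p k n).
Proof.
  intros HK Hp. induction n as [|n IH]; intros k; simpl; [exact Hp|].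
  now apply step_map_in.
Qed.

Definition greedy_index (s : R) : nat :=
  if Rlt_dec 0 s then Z.to_nat (up (/ s)) else O.

Lemma greedy_shift_bounds (s : R) :
  0 <= s <= 1 -> 0 <= s - / INR (greedy_index s) <= s ^ 2.
Proof.
  intros Hs. unfold greedy_index.
  destruct (Rlt_dec 0 s) as [Hs0|Hs0]; [|simpl; rewrite Rinv_0; nra].
  destruct (archimed (/ s)) as [Hup1 Hup2].
  assert (Hinv : 1 <= / s) by (rewrite <- Rinv_1; apply Rinv_le_contravar; lra).
  assert (HM : INR (Z.to_nat (up (/ s))) = IZR (up (/ s)))
    by (rewrite INR_IZR_INZ, Z2Nat.id; [reflexivity | apply le_IZR; lra]).
  rewrite HM. set (M := IZR (up (/ s))) in *.
  assert (Hss : s * / s = 1) by (field; lra).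
  assert (HMM : M * / M = 1) by (field; lra).
  split; nra.
Qed.

Section Renormalisation.

Variable a : nat -> bool.

Fixpoint x_orbit (x : R) (n : nat) : R :=
  match n with
  | O => x
  | S k => 2 * x_orbit x k - shift (a (S k)) (greedy_index (2 * x_orbit x k))
  end.

Fixpoint y_orbit (y : R) (n : nat) : R :=
  match n with
  | O => y
  | S k => 2 * y_orbit y k - digit (a (S k))
  end.

Lemma y_orbit_partial_sum (y : R) (n : nat) :
  y_orbit y (S n) / 2 ^ S n = y - sum_f_R0 (fun i => digit (a (S i)) / 2 ^ S i) n.
Proof.
  assert (H2 : forall k, 2 ^ k <> 0) by (intro k; apply pow_nonzero; lra).
  induction n as [|n IH].
  - simpl. field.
  - rewrite tech5.
    transitivity (y_orbit y (S n) / 2 ^ S n - digit (a (S (S n))) / 2 ^ S (S n)).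
    + cbn [y_orbit]. simpl. field. exact (H2 n).
    + rewrite IH. ring.
Qed.

Definition x_index (x : R) (k : nat) : nat := greedy_index (2 * x_orbit x k).

Definition approx (x : R) (p : pt) (n : nat) : pt :=
  compose_steps (fun k => a (S k)) (x_index x) p O n.

Lemma approx_fst (x : R) (p : pt) (n : nat) :
  fst (approx x p n) - x = (fst p - x_orbit x n) / 2 ^ n.
Proof.
  apply (halving_tracking (fun k => shift (a (S k)) (x_index x k)) (x_orbit x)
           (fun k n => fst (compose_steps (fun k => a (S k)) (x_index x) p k n)));
    [reflexivity | reflexivity | intros k m; apply fst_step_map].
Qed.

Lemma approx_snd (x y : R) (p : pt) (n : nat) :
  snd (approx x p n) - y = (snd p - y_orbit y n) / 2 ^ n.
Proof.
  apply (halving_tracking (fun k => digit (a (S k))) (y_orbit y)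
           (fun k n => snd (compose_steps (fun k => a (S k)) (x_index x) p k n)));
    [reflexivity | reflexivity | intros k m; apply snd_step_map].
Qed.

Lemma approx_snd_cv (x y : R) (p : pt) :
  infinite_sum (fun i => digit (a (S i)) / 2 ^ S i) y ->
  Un_cv (fun n => snd (approx x p n)) y.
Proof.
  intros Hsum. apply (CV_shift _ 1). rewrite <- (Rplus_0_l y).
  apply (Un_cv_ext (fun n => snd p / 2 ^ (n + 1) +
                             sum_f_R0 (fun i => digit (a (S i)) / 2 ^ S i) n)).
  - intros n. rewrite Nat.add_1_r.
    pose proof (approx_snd x y p (S n)) as E. pose proof (y_orbit_partial_sum y n).
    rewrite Rdiv_minus_distr in E. lra.
  - apply CV_plus; [apply (CV_shift' (fun n => snd p / 2 ^ n)), cv_pow_half | exact Hsum].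
Qed.

Section Budget.

Variable N : nat.
Hypothesis zeros_dense : forall n, (N <= n)%nat -> (2 * n <= 5 * zeros_upto a n)%nat.

(* The invariant is [w_n^2 2^(budget n) <= 4^n].  With these weights a zero step keeps it as
   soon as 2 n <= 3 z + 2 max(N, z) for the number z of zeros so far, which holds for n < N
   trivially and for n >= N by density. *)
Definition budget (n : nat) : nat :=
  3 * zeros_upto a n + 2 * Nat.max N (zeros_upto a n) + 7.

Lemma budget_ge (n : nat) : (2 * n + 2 <= budget n)%nat.
Proof.
  unfold budget. destruct (le_lt_dec N n) as [HNn|HnN]; [specialize (zeros_dense n HNn)|]; lia.
Qed.

Lemma budget_one_step (n : nat) : a (S n) = true -> budget (S n) = budget n.
Proof. intros Ha. unfold budget. simpl. rewrite Ha. lia. Qed.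

Lemma budget_zero_step (n : nat) :
  a (S n) = false -> (2 * n + budget (S n) + 2 <= 2 * budget n)%nat.
Proof.
  intros Ha. unfold budget. simpl. rewrite Ha.
  destruct (le_lt_dec N n) as [HNn|HnN]; [specialize (zeros_dense n HNn)|]; lia.
Qed.

Lemma x_orbit_budget (x : R) :
  0 <= x <= 1 / (56 * 2 ^ N) ->
  forall n, 0 <= x_orbit x n /\ x_orbit x n ^ 2 * 2 ^ budget n <= 2 ^ (2 * n).
Proof.
  intros Hx. induction n as [|n [Hw0 Hw]].
  - unfold budget. simpl zeros_upto. rewrite Nat.max_0_r.
    replace (3 * 0 + 2 * N + 7)%nat with (N + N + 7)%nat by lia.
    assert (HP : 0 < 2 ^ N) by (apply pow_lt; lra).
    assert (HxN : x * 2 ^ N <= 1 / 56)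
      by (destruct Hx as [_ Hx]; unfold Rdiv in *; rewrite Rinv_mult in Hx;
          apply Rmult_le_reg_r with (/ 2 ^ N); [apply Rinv_0_lt_compat; lra|];
          rewrite Rmult_assoc, Rinv_r; lra).
    rewrite !pow_add. simpl. split; [lra|].
    assert (0 <= x * 2 ^ N) by (apply Rmult_le_pos; lra). nra.
  - pose proof (sq_bound_half _ _ _ Hw (budget_ge n)) as Hhalf.
    cbn [x_orbit]. destruct (a (S n)) eqn:Ha; unfold shift.
    + rewrite (budget_one_step n Ha). split; [lra|].
      replace (2 * S n)%nat with (2 * n + 2)%nat by lia. rewrite pow_add.
      replace ((2 * x_orbit x n - 0) ^ 2 * 2 ^ budget n)
        with (4 * (x_orbit x n ^ 2 * 2 ^ budget n)) by ring.
      simpl (2 ^ 2). lra.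
    + pose proof (greedy_shift_bounds (2 * x_orbit x n) ltac:(lra)) as Hstep.
      split; [lra|].
      replace (2 * S n)%nat with (2 * n + 2)%nat by lia.
      apply (sq_bound_square (x_orbit x n) _ _ (budget n)); [lra | nra | exact Hw |].
      exact (budget_zero_step n Ha).
Qed.

Lemma x_orbit_small (x : R) :
  0 <= x <= 1 / (56 * 2 ^ N) -> forall n, 0 <= x_orbit x n <= 1 / 2.
Proof.
  intros Hx n. destruct (x_orbit_budget x Hx n) as [Hw0 Hw].
  split; [exact Hw0 | exact (sq_bound_half _ _ _ Hw (budget_ge n))].
Qed.

End Budget.

Lemma approx_fst_cv (x : R) (p : pt) :
  (forall n, 0 <= x_orbit x n <= 1 / 2) -> Un_cv (fun n => fst (approx x p n)) x.
Proof.
  intros Hw eps Heps.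
  assert (Hb : forall n, Rabs (fst p - x_orbit x n) <= Rabs (fst p) + 1).
  { intros n. specialize (Hw n). eapply Rle_trans; [apply Rabs_triang|].
    rewrite Rabs_Ropp, (Rabs_pos_eq (x_orbit x n)); lra. }
  destruct (cv_bounded_div_pow2 _ _ Hb eps Heps) as [M HM]. exists M. intros n Hn.
  specialize (HM n Hn). unfold Rdist in *. rewrite Rminus_0_r, <- approx_fst in HM. exact HM.
Qed.

End Renormalisation.

Theorem mainTheorem9 :
  forall K : pt -> Prop,
    (exists p, K p) -> compact2 K -> IFS_fixed K ->
    exists N0 : nat, forall N : nat, (N0 <= N)%nat ->
      forall (y : R) (a : nat -> bool),
        0 <= y <= 1 ->
        infinite_sum (fun i => digit (a (S i)) / 2 ^ (S i)) y ->
        (forall n : nat, (N <= n)%nat -> INR (zeros_upto a n) >= 2 / 5 * INR n) ->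
        forall x : R, 0 <= x <= 1 / (56 * 2 ^ N) -> K (x, y).
Proof.
  intros K [p Hp] Hcompact Hfixed. exists O. intros N _ y a _ Hsum Hdense x Hx.
  assert (Hzeros : forall n, (N <= n)%nat -> (2 * n <= 5 * zeros_upto a n)%nat).
  { intros n Hn. specialize (Hdense n Hn). apply INR_le. rewrite !mult_INR. simpl. lra. }
  apply (compact2_limit K (approx a x p)); [exact Hcompact | |].
  - intros n. unfold approx. apply compose_steps_in; assumption.
  - split; simpl.
    + exact (approx_fst_cv a x p (x_orbit_small a N Hzeros x Hx)).
    + exact (approx_snd_cv a x y p Hsum).
Qed.
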